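(* Let $\mathcal{X}$ be a finite set, $\mathcal{Z}$ a measurable space with a measure $\mu$, and $V:\mathcal{X}\to\mathcal{Z}$ a channel such that for each $x\in\mathcal{X}$ the probability measure $V(\cdot\mid x)$ has density $\omega(z\mid x)$ with respect to $\mu$. Let $\{f_s:\mathcal{X}\to\{0,1\}^k,\ s\in\mathcal{S}\}$ be a $b$-balanced $k$-bit UHF with finite seed set $\mathcal{S}$. Let $M$ be uniformly distributed on $\mathcal{M}=\{0,1\}^k$, let $S$ be uniformly distributed on $\mathcal{S}$ and independent of $M$, and given $M=m$, $S=s$, let $X$ be uniformly distributed on $f_s^{-1}(m)$; let $Z$ be the output of $V$ with input $X$ (so that, given $X$, $Z$ is conditionally independent of $(M,S)$ with law $V(\cdot\mid X)$). Then for every $\epsilon\in[0,1)$, \[ I(M\wedge Z,S)\le \frac{1}{\ln 2}\cdot 2^{-(b-I_{\max}^{\epsilon}(V))}+\epsilon k, \] where mutual information is measured in bits.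
   Context: A family $\{f_s: s\in\mathcal{S}\}$ of maps $f_s:\mathcal{X}\to\{0,1\}^k$ is a ($k$-bit) 2-universal hash family (UHF) if for all $x\neq x'$ in $\mathcal{X}$, $\frac{1}{|\mathcal{S}|}|\{s\in\mathcal{S}: f_s(x)=f_s(x')\}|\le 2^{-k}$. It is $b$-balanced if for every $s\in\mathcal{S}$ and every $m\in\{0,1\}^k$, $|\{x\in\mathcal{X}: f_s(x)=m\}|=2^b$. For a (possibly subnormalized) channel $V$ with densities $\omega(z\mid x)$ w.r.t. $\mu$, its max-information is $I_{\max}(V)=\log_2\int_{\mathcal{Z}}\max_{x\in\mathcal{X}}\omega(z\mid x)\,\mu(dz)$. For $\mathcal{T}\subseteq\mathcal{X}\times\mathcal{Z}$, $V_{\mathcal{T}}$ is the subnormalized channel with density $\omega_{\mathcal{T}}(z\mid x)=\omega(z\mid x)$ if $(x,z)\in\mathcal{T}$ and $0$ otherwise. The $\epsilon$-smooth max-information $I_{\max}^{\epsilon}(V)$ is the infimum of $I_{\max}(V_{\mathcal{T}})$ over all (measurable) $\mathcal{T}\subseteq\mathcal{X}\times\mathcal{Z}$ such that $V(\{z:(x,z)\in\mathcal{T}\}\mid x)\ge 1-\epsilon$ for all $x\in\mathcal{X}$. *)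

From HB Require Import structures.
From mathcomp Require Import all_boot all_order all_algebra.
From mathcomp Require Import all_classical all_reals all_analysis.
Set Implicit Arguments. Unset Strict Implicit. Unset Printing Implicit Defensive.
Import Order.TTheory GRing.Theory Num.Theory.
Local Open Scope classical_set_scope.
Local Open Scope ring_scope.

Section Defs.
Context {R : realType}.

(** base-2 logarithm on reals (ln x = 0 for x <= 0 in the library; only used
    in the form a * log2 (a / c), where a = 0 gives the convention 0 log 0 = 0) *)
Definition log2 (x : R) : R := ln x / ln 2.

Definition log2e (x : \bar R) : \bar R :=
  match x with
  | EFin r => if r == 0 then -oo%E else (log2 r)%:E
  | +oo%E => +oo%E
  | -oo%E => -oo%E
  end.

Definition exp2e (x : \bar R) : \bar R :=
  match x with
  | EFin r => (2 `^ r)%:E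
  | +oo%E => +oo%E
  | -oo%E => 0%E
  end.

Definition is_UHF (X Sd : finType) (k : nat) (f : Sd -> X -> k.-tuple bool) : Prop :=
  forall x x' : X, x != x' ->
    (#|[set s : Sd | f s x == f s x']|%:R / #|Sd|%:R : R) <= (2%:R : R) ^- k.

Definition is_balanced (X Sd : finType) (k b : nat) (f : Sd -> X -> k.-tuple bool) : Prop :=
  forall (s : Sd) (m : k.-tuple bool), #|[set x : X | f s x == m]| = (2 ^ b)%N.

Context {d : measure_display} {Z : measurableType d}.
Variable mu : {measure set Z -> \bar R}.

(** Mutual information (in bits) I(M /\ Y) between a discrete random variable M
    with pmf PM and a random variable Y = (S, Z) taking values in Sd x Z, where
    the conditional law of Y given M = m has density q m w.r.t. counting x mu:
       I(M /\ Y) = sum_m PM(m) D(P_{Y|M=m} || P_Y)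
                 = sum_m PM(m) sum_s int q(s,z|m) log2 (q(s,z|m) / qY(s,z)) dmu(z),
    with qY(s,z) = sum_m' PM(m') q(s,z|m'). *)
Definition mutinfo_dc (M Sd : finType) (PM : M -> R) (q : M -> Sd -> Z -> R) : \bar R :=
  let qY := fun s z => \sum_(m' : M) PM m' * q m' s z in
  (\sum_(m : M) (PM m)%:E *
     \sum_(s : Sd) \int[mu]_z (q m s z * log2 (q m s z / qY s z))%:E)%E.

(** The model of the statement: M uniform on {0,1}^k, S uniform on Sd independent
    of M, X uniform on f_s^{-1}(m) given (M,S) = (m,s), Z ~ V(.|X).
    Density of (S,Z) given M = m w.r.t. counting x mu. *)
Definition SZ_given_M (X Sd : finType) (k : nat) (f : Sd -> X -> k.-tuple bool)
    (omega : X -> Z -> R) (m : k.-tuple bool) (s : Sd) (z : Z) : R :=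
  #|Sd|%:R^-1 * (#|[set x : X | f s x == m]|%:R^-1 *
                 \sum_(x : X | f s x == m) omega x z).

Definition MI_M_ZS (X Sd : finType) (k : nat) (f : Sd -> X -> k.-tuple bool)
    (omega : X -> Z -> R) : \bar R :=
  mutinfo_dc (fun _ : k.-tuple bool => #|{: k.-tuple bool}|%:R^-1)
             (SZ_given_M f omega).

Definition chan (X : finType) (omega : X -> Z -> R) (x : X) (A : set Z) : \bar R :=
  (\int[mu]_(z in A) (omega x z)%:E)%E.

Definition Imax_T (X : finType) (omega : X -> Z -> R) (T : set (X * Z)) : \bar R :=
  log2e (\int[mu]_z
          (\big[Num.max/0]_(x : X) (if (x, z) \in T then omega x z else 0))%:E)%E.

(** eps-smooth max-information: infimum over measurable T subset X x Z
    (X finite with the discrete sigma-algebra, so T is measurable iff each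
    section {z | (x,z) in T} is measurable) with V(T_x | x) >= 1 - eps. *)
Definition smooth_Imax (X : finType) (omega : X -> Z -> R) (eps : R) : \bar R :=
  ereal_inf [set Imax_T omega T | T in
    [set T : set (X * Z) |
      (forall x, measurable [set z | T (x, z)]) /\
      (forall x, ((1 - eps)%:E <= chan omega x [set z | T (x, z)])%E)]].

End Defs.

From HB Require Import structures.
From mathcomp Require Import all_boot all_order all_algebra.
From mathcomp Require Import all_classical all_reals all_analysis measurable_realfun.
From mathcomp.algebra_tactics Require Import ring lra.
Import Order.TTheory GRing.Theory Num.Theory.
Local Open Scope classical_set_scope.
Local Open Scope ring_scope.

(** Fix z and split omega(. | z) = t + c, where t is the truncation of the
   channel to an admissible set T. The log-sum inequality bounds the integrand
   of I(M /\ Z, S) by a chi-square term in t plus k times the average of c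
   over X, where |X| = 2^(k+b) by balancedness. By 2-universality the weighted
   collision count sum_s sum_m (sum_(f_s x = m) t x)^2 is at most
   |S| (sum t^2 + 2^-k (sum t)^2), so the chi-square term is at most
   2^-b max_x t x / ln 2. Integrating in z, the first part gives
   2^(I_max(V_T) - b) / ln 2 and the second at most eps k, since c has mass at
   most eps for every input. Finally let I_max(V_T) decrease to the smooth
   max-information. *)

Section log2.
Context {R : realType}.
Implicit Types (r y : R) (k : nat).

Lemma ln2_gt0 : 0 < ln (2 : R).
Proof. by rewrite ln_gt0 // ltr1n. Qed.

Lemma ln_le_subr1 {y} : 0 < y -> ln y <= y - 1.
Proof.
move=> y0; have /le_ln1Dx : -1 < y - 1 by lra.
by rewrite addrC subrK.
Qed.

Lemma log2_powR r : log2 (2 `^ r) = r.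
Proof. by rewrite /log2 ln_powR mulfK // gt_eqF // ln2_gt0. Qed.

Lemma powR_log2 y : 0 < y -> 2 `^ log2 y = y.
Proof.
move=> y0; rewrite /powR pnatr_eq0 /= /log2 divfK ?lnK ?posrE //.
by rewrite gt_eqF // ln2_gt0.
Qed.

Lemma log2_expr2 k : log2 (2 ^+ k : R) = k%:R.
Proof. by rewrite -powR_mulrn // log2_powR. Qed.

Lemma ltr_log2 : {in Num.pos &, {mono @log2 R : y y' / y < y'}}.
Proof. by move=> y y' y0 y'0; rewrite /log2 ltr_pM2r ?invr_gt0 ?ln2_gt0 // ltr_ln. Qed.

End log2.

Section divergence_inequalities.
Context {R : realType}.
Implicit Types (a c r : R) (k : nat).

Lemma gt0_of_le_mulr {N a c : R} : 0 <= c -> a <= N * c -> 0 < a -> 0 < c.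
Proof.
move=> c0 ac a0; rewrite lt_def c0 andbT; apply/eqP => c_eq0.
by move: ac; rewrite c_eq0 mulr0; lra.
Qed.

Lemma mul_ln_div_ge {a c r} : 0 <= a -> 0 <= c -> 0 < r -> (0 < a -> 0 < c) ->
  a * ln r + a - c * r <= a * ln (a / c).
Proof.
move=> a0 c0 r0 ac; have [a_gt0|a_le0] := ltP 0 a; last first.
  have -> : a = 0 by lra.
  have : 0 <= c * r by rewrite mulr_ge0 // ltW.
  by rewrite !mul0r; lra.
have c_gt0 := ac a_gt0.
have := ln_le_subr1 (divr_gt0 r0 (divr_gt0 a_gt0 c_gt0)).
rewrite [ln (r / _)]ln_div ?posrE ?divr_gt0 // => /(ler_wpM2l (ltW a_gt0)).
have -> : a * (r / (a / c) - 1) = c * r - a by field; rewrite !gt_eqF.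
by rewrite mulrBr; lra.
Qed.

Lemma mul_ln_div_le {a c} : 0 <= a -> (0 < a -> 0 < c) ->
  a * ln (a / c) <= a ^+ 2 / c - a.
Proof.
move=> a0 ac; have [a_gt0|a_le0] := ltP 0 a; last first.
  have -> : a = 0 by lra.
  by rewrite expr0n !mul0r subrr.
have c_gt0 := ac a_gt0.
have := ln_le_subr1 (divr_gt0 a_gt0 c_gt0) => /(ler_wpM2l (ltW a_gt0)).
by rewrite mulrBr mulr1 mulrA -expr2.
Qed.

Lemma mul_log2_div_le {k a c} : 0 <= a -> 0 <= c -> a <= 2 ^+ k * c ->
  a * log2 (a / c) <= k%:R * a.
Proof.
move=> a0 c0 ac; have [a_gt0|a_le0] := ltP 0 a; last first.
  have -> : a = 0 by lra.
  by rewrite mul0r mulr0.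
have c_gt0 := gt0_of_le_mulr c0 ac a_gt0.
rewrite mulrC; apply: ler_wpM2r; first exact: ltW.
rewrite -log2_expr2 /log2 ler_pM2r ?invr_gt0 ?ln2_gt0 //.
by rewrite ler_ln ?posrE ?divr_gt0 ?exprn_gt0 // ler_pdivrMr.
Qed.

Lemma log_sum_le {a1 a2 c1 c2 : R} : 0 <= a1 -> 0 <= a2 -> 0 <= c1 -> 0 <= c2 ->
  (0 < a1 -> 0 < c1) -> (0 < a2 -> 0 < c2) ->
  (a1 + a2) * ln ((a1 + a2) / (c1 + c2)) <= a1 * ln (a1 / c1) + a2 * ln (a2 / c2).
Proof.
move=> a10 a20 c10 c20 ac1 ac2.
have [a_eq0|a_neq0] := eqVneq (a1 + a2) 0.
  have -> : a1 = 0 by lra.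
  have -> : a2 = 0 by lra.
  by rewrite addr0 !mul0r addr0.
have a_gt0 : 0 < a1 + a2 by rewrite lt_def a_neq0 addr_ge0.
have c_gt0 : 0 < c1 + c2.
  have [/ac1|a1_le0] := ltP 0 a1; first lra.
  have /ac2 : 0 < a2 by lra.
  lra.
set r := (a1 + a2) / (c1 + c2).
have r_gt0 : 0 < r by rewrite divr_gt0.
have := mul_ln_div_ge a10 c10 r_gt0 ac1; have := mul_ln_div_ge a20 c20 r_gt0 ac2.
have : c1 * r + c2 * r = a1 + a2 by rewrite -mulrDl /r mulrC divfK // gt_eqF.
rewrite mulrDl; lra.
Qed.

Lemma mul_log2_split_le {k} {qt qc yt yc : R} : 0 <= qt -> 0 <= qc -> 0 <= yt -> 0 <= yc ->
  qt <= 2 ^+ k * yt -> qc <= 2 ^+ k * yc ->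
  (qt + qc) * log2 ((qt + qc) / (yt + yc)) <= (ln 2)^-1 * (qt ^+ 2 / yt - qt) + k%:R * qc.
Proof.
move=> qt0 qc0 yt0 yc0 ht hc.
have ht' := gt0_of_le_mulr yt0 ht; have hc' := gt0_of_le_mulr yc0 hc.
have il2 : 0 <= (ln (2 : R))^-1 by rewrite invr_ge0 ltW // ln2_gt0.
have hsum := ler_wpM2l il2 (log_sum_le qt0 qc0 yt0 yc0 ht' hc').
have hqt := ler_wpM2l il2 (mul_ln_div_le qt0 ht').
have hqc := mul_log2_div_le qc0 yc0 hc.
rewrite /log2 in hqc *; rewrite mulrDr in hsum; lra.
Qed.

Lemma normr_mul_log2_le {k a c} : 0 <= a -> 0 <= c -> a <= 2 ^+ k * c ->
  `|a * log2 (a / c)| <= k%:R * a + (ln 2)^-1 * c.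
Proof.
move=> a0 c0 ac; have il2 : 0 < (ln (2 : R))^-1 by rewrite invr_gt0 ln2_gt0.
have ka : 0 <= k%:R * a by rewrite mulr_ge0.
have ic : 0 <= (ln 2)^-1 * c by rewrite mulr_ge0 // ltW.
rewrite ler_norml; apply/andP; split; last first.
  by have := mul_log2_div_le a0 c0 ac; lra.
have := mul_ln_div_ge a0 c0 ltr01 (gt0_of_le_mulr c0 ac).
rewrite ln1 mulr0 add0r mulr1 => /(ler_wpM2l (ltW il2)).
have : 0 <= (ln 2)^-1 * a by rewrite mulr_ge0 // ltW.
rewrite /log2 mulrA mulrC mulrBr; lra.
Qed.

Lemma mul_log2_divE {a c} : 0 <= a -> (0 < a -> 0 < c) ->
  a * log2 (a / c) = (ln 2)^-1 * (a * (ln a - ln c)).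
Proof.
move=> a0 ac; have [a_gt0|a_le0] := ltP 0 a; last first.
  have -> : a = 0 by lra.
  by rewrite !mul0r mulr0.
by rewrite /log2 ln_div ?posrE ?ac //; ring.
Qed.

End divergence_inequalities.

Section exp2e.
Context {R : realType}.

Lemma exp2e_ge0 (a : \bar R) : (0 <= exp2e a)%E.
Proof. by case: a => [r| |] //=; rewrite lee_fin powR_ge0. Qed.

Lemma le_powR2_of_log2e_lt {J : \bar R} {r : R} :
  (0 <= J)%E -> (log2e J < r%:E)%E -> (J <= (2 `^ r)%:E)%E.
Proof.
case: J => [j| |] //= j0; case: ifPn => [/eqP -> _|j_neq0]; rewrite ?lee_fin ?powR_ge0 //.
have j_gt0 : 0 < j by rewrite lt_def j_neq0 -lee_fin.
rewrite lte_fin -[j in j <= _]powR_log2 // => /ltW.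
by apply: ler_powR; rewrite ler1n.
Qed.

Lemma le_exp2e_inf (c e : R) (a x : \bar R) : 0 < c ->
  (forall r, (a < r%:E)%E -> (x <= (c * 2 `^ r + e)%:E)%E) ->
  (x <= c%:E * exp2e a + e%:E)%E.
Proof.
move=> c_gt0 xle; case: a xle => [a| |] /= xle.
- apply/lee_addgt0Pr => delta delta_gt0.
  have p_gt0 : 0 < 2 `^ a + delta / c by rewrite ltr_pwDr ?divr_gt0 ?powR_gt0.
  have /xle : (a%:E < (log2 (2 `^ a + delta / c))%:E)%E.
    by rewrite lte_fin -{1}(log2_powR a) ltr_log2 ?posrE ?powR_gt0 // ltrDl divr_gt0.
  rewrite powR_log2 // => /le_trans; apply.
  by rewrite -EFinM -!EFinD lee_fin mulrDr mulrCA divff ?gt_eqF // mulr1; lra.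
- by rewrite mulry gtr0_sg // mul1e addye // leey.
- rewrite mule0 add0e; apply/lee_addgt0Pr => delta delta_gt0.
  have /xle : (-oo < (log2 (delta / c))%:E)%E by rewrite ltNyr.
  by rewrite powR_log2 ?divr_gt0 // mulrCA divff ?gt_eqF // mulr1 addrC EFinD.
Qed.

End exp2e.

Section integral_lemmas.
Context {d : measure_display} {T : measurableType d} {R : realType}.
Variable mu : {measure set T -> \bar R}.

Lemma measurable_sum_cond D (I : Type) (s : seq I) (P : pred I) (h : I -> T -> R) :
  (forall i, measurable_fun D (h i)) ->
  measurable_fun D (fun z => \sum_(i <- s | P i) h i z).
Proof.
move=> mh; under eq_fun do rewrite big_mkcond.
by apply: measurable_sum => i; case: (P i) => //; exact: measurable_cst.
Qed.

Lemma measurable_bigmax D (I : Type) (s : seq I) (h : I -> T -> R) :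
  (forall i, measurable_fun D (h i)) ->
  measurable_fun D (fun z => \big[Num.max/0]_(i <- s) h i z).
Proof.
move=> mh; elim: s => [|i s ih].
  by under eq_fun do rewrite big_nil; exact: measurable_cst.
by under eq_fun do rewrite big_cons; exact: measurable_maxr.
Qed.

Lemma measurable_fun_if_mem {A : set T} {g : T -> R} : measurable A ->
  measurable_fun setT g -> measurable_fun setT (fun z => if z \in A then g z else 0).
Proof.
move=> mA mg; have := (measurable_restrictT g mA).1 (measurable_funS measurableT (@subsetT _ A) mg).
by apply: eq_measurable_fun => z _; rewrite patchE.
Qed.

Lemma ge0_integrable_EFin (g : T -> R) : measurable_fun setT g -> (forall z, 0 <= g z) ->
  (\int[mu]_z (g z)%:E < +oo)%E -> mu.-integrable setT (EFin \o g).
Proof.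
move=> mg g0 g_fin; apply/integrableP; split; first exact/measurable_EFinP.
by under eq_integral do rewrite /= ger0_norm //.
Qed.

Lemma ge0_integral_lin (I : finType) (a c : R) (g : T -> R) (h : I -> T -> R) :
  0 <= a -> 0 <= c -> measurable_fun setT g -> (forall i, measurable_fun setT (h i)) ->
  (forall z, 0 <= g z) -> (forall i z, 0 <= h i z) ->
  (\int[mu]_z (a * g z + c * \sum_i h i z)%:E =
     a%:E * \int[mu]_z (g z)%:E + c%:E * \sum_i \int[mu]_z (h i z)%:E)%E.
Proof.
move=> a0 c0 mg mh g0 h0.
under eq_integral do rewrite EFinD !EFinM -sumEFin.
rewrite ge0_integralD //; last 4 first.
- by move=> z _; rewrite lee_fin mulr_ge0.
- by apply: measurable_funeM; exact/measurable_EFinP.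
- by move=> z _; rewrite sumEFin lee_fin mulr_ge0 ?sumr_ge0.
- by apply: measurable_funeM; apply: emeasurable_sum => i; exact/measurable_EFinP.
rewrite ge0_integralZl_EFin //; last 2 first.
- by move=> z _; rewrite lee_fin.
- exact/measurable_EFinP.
rewrite ge0_integralZl_EFin //; last 2 first.
- by move=> z _; rewrite sumEFin lee_fin sumr_ge0.
- by apply: emeasurable_sum => i; exact/measurable_EFinP.
rewrite ge0_integral_sum // => [i|i z _]; first exact/measurable_EFinP.
by rewrite lee_fin.
Qed.

End integral_lemmas.

Lemma card_bitsR (R : numDomainType) (k : nat) : #|{: k.-tuple bool}|%:R = 2 ^+ k :> R.
Proof. by rewrite card_tuple card_bool natrX. Qed.

Lemma sumr_bool_card (V : pzSemiRingType) (T : finType) (P : pred T) :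
  \sum_i (P i)%:R = #|[set i | P i]|%:R :> V.
Proof.
rewrite -sumr_const [RHS]big_mkcond; apply: eq_bigr => i _.
have -> : (i \in [set i | P i]) = P i by apply/idP/idP => [/set_mem|/mem_set].
by case: (P i).
Qed.

Section hashing.
Context {R : realType}.
Variables (X Sd : finType) (k b : nat) (f : Sd -> X -> k.-tuple bool).
Implicit Types (t c : X -> R) (m : k.-tuple bool) (s : Sd).

(** [qcond t m s] is the density of (S, Z) given M = m at a point z where
    t = omega(. | z), and [qmarg t s] is the density of (S, Z) at that point;
    [info_density] is then the integrand of [MI_M_ZS]. *)
Definition qcond t m s : R :=
  #|Sd|%:R^-1 * (#|[set x : X | f s x == m]|%:R^-1 * \sum_(x | f s x == m) t x).

Definition qmarg t s : R :=
  \sum_(m : k.-tuple bool) #|{: k.-tuple bool}|%:R^-1 * qcond t m s.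

Definition sum_MS (g : k.-tuple bool -> Sd -> R) : R :=
  \sum_(m : k.-tuple bool) #|{: k.-tuple bool}|%:R^-1 * \sum_(s : Sd) g m s.

Definition info_term t m s : R := qcond t m s * log2 (qcond t m s / qmarg t s).

Definition info_density t : R := sum_MS (info_term t).

Lemma sum_fibers (F : X -> R) s :
  \sum_(m : k.-tuple bool) \sum_(x | f s x == m) F x = \sum_x F x.
Proof. by rewrite (partition_big (f s) xpredT). Qed.

Lemma sum_MS_lin (a1 a2 : R) (g1 g2 g3 : k.-tuple bool -> Sd -> R) :
  sum_MS (fun m s => a1 * (g1 m s - g2 m s) + a2 * g3 m s) =
  a1 * (sum_MS g1 - sum_MS g2) + a2 * sum_MS g3.
Proof.
rewrite /sum_MS -sumrB mulr_sumr [a2 * _]mulr_sumr -big_split /=.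
apply: eq_bigr => m _; rewrite big_split /= -!mulr_sumr sumrB; ring.
Qed.

Local Notation B := ((2 ^ b)%:R : R).
Local Notation sigma := (#|Sd|%:R : R).

Lemma B_gt0 : 0 < B. Proof. by rewrite ltr0n expn_gt0. Qed.

Section balanced.
Hypothesis f_bal : is_balanced b f.

Lemma card_balanced s : #|X| = (2 ^ k * 2 ^ b)%N.
Proof.
rewrite -sum1_card (partition_big (f s) xpredT) //=.
rewrite (eq_bigr (fun=> 2 ^ b)%N) => [|m _]; last first.
  rewrite -(f_bal s m) -sum1_card; apply: eq_bigl => x.
  by apply/idP/idP => [/mem_set|/set_mem].
by rewrite sum_nat_const card_tuple card_bool.
Qed.

Lemma qcondE t m s : qcond t m s = (sigma * B)^-1 * \sum_(x | f s x == m) t x.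
Proof. by rewrite /qcond f_bal invfM mulrA. Qed.

Lemma qmargE t s : qmarg t s = (2 ^+ k * B * sigma)^-1 * \sum_x t x.
Proof.
rewrite /qmarg -(sum_fibers _ s) mulr_sumr; apply: eq_bigr => m _.
by rewrite qcondE card_bitsR mulrA -invfM [sigma * B]mulrC mulrA.
Qed.

Lemma qcond_ge0 t m s : (forall x, 0 <= t x) -> 0 <= qcond t m s.
Proof. by move=> t0; rewrite qcondE mulr_ge0 ?sumr_ge0. Qed.

Lemma qmarg_ge0 t s : (forall x, 0 <= t x) -> 0 <= qmarg t s.
Proof. by move=> t0; rewrite qmargE mulr_ge0 ?sumr_ge0. Qed.

Lemma qcond_le_qmarg t m s : (forall x, 0 <= t x) -> qcond t m s <= 2 ^+ k * qmarg t s.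
Proof.
move=> t0; rewrite /qmarg (bigD1 m) //= card_bitsR mulrDr mulrA.
rewrite mulfV ?expf_neq0 // mul1r lerDl mulr_ge0 ?exprn_ge0 ?sumr_ge0 // => m' _.
by rewrite mulr_ge0 ?qcond_ge0 // invr_ge0 ler0n.
Qed.

Lemma qcondD t c m s : qcond (fun x => t x + c x) m s = qcond t m s + qcond c m s.
Proof. by rewrite /qcond big_split /= !mulrDr. Qed.

Lemma qmargD t c s : qmarg (fun x => t x + c x) s = qmarg t s + qmarg c s.
Proof. by rewrite /qmarg -big_split /=; apply: eq_bigr => m _; rewrite qcondD mulrDr. Qed.

Hypothesis Sd_gt0 : (0 < #|Sd|)%N.

Lemma sigma_gt0 : 0 < sigma. Proof. by rewrite ltr0n. Qed.

Lemma sum_MS_qcond t : sum_MS (qcond t) = (2 ^+ k * B)^-1 * \sum_x t x.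
Proof.
rewrite /sum_MS; under eq_bigr do rewrite mulr_sumr.
rewrite exchange_big /=; under eq_bigr do rewrite -/(qmarg t _) qmargE.
rewrite sumr_const -mulr_natl.
by field; rewrite !gt_eqF ?sigma_gt0 ?B_gt0 ?exprn_gt0.
Qed.

Lemma sum_sq_fibers t s :
  \sum_(m : k.-tuple bool) (\sum_(x | f s x == m) t x) ^+ 2 =
  \sum_x \sum_x' t x * t x' * (f s x == f s x')%:R.
Proof.
rewrite [RHS](partition_big (f s) xpredT) //=; apply: eq_bigr => m _.
rewrite expr2 mulr_suml; apply: eq_bigr => x /eqP fxm.
rewrite mulr_sumr big_mkcond /=; apply: eq_bigr => x' _.
by rewrite fxm [_ == m]eq_sym mulr_natr mulrb.
Qed.

Lemma collision_sumE t :
  \sum_s \sum_(m : k.-tuple bool) (\sum_(x | f s x == m) t x) ^+ 2 =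
  \sum_x \sum_x' t x * t x' * #|[set s : Sd | f s x == f s x']|%:R.
Proof.
under eq_bigr do rewrite sum_sq_fibers.
rewrite exchange_big; apply: eq_bigr => x _.
rewrite exchange_big; apply: eq_bigr => x' _.
by rewrite -mulr_sumr sumr_bool_card.
Qed.

Hypothesis f_uhf : is_UHF (R := R) f.

Lemma card_collide_le x x' :
  #|[set s : Sd | f s x == f s x']|%:R <= (x == x')%:R * sigma + sigma / 2 ^+ k.
Proof.
have [<-|neq] := eqVneq x x'.
  apply: (@le_trans _ _ sigma); first by rewrite ler_nat max_card.
  by rewrite mulr1n mul1r lerDl divr_ge0 ?exprn_ge0.
by rewrite mulr0n mul0r add0r mulrC -ler_pdivrMr ?sigma_gt0 // f_uhf.
Qed.

Lemma collision_sum_le t : (forall x, 0 <= t x) ->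
  \sum_s \sum_(m : k.-tuple bool) (\sum_(x | f s x == m) t x) ^+ 2 <=
  sigma * (\sum_x t x ^+ 2 + (2 ^+ k)^-1 * (\sum_x t x) ^+ 2).
Proof.
move=> t0; rewrite collision_sumE.
apply: (@le_trans _ _
    (\sum_x \sum_x' t x * t x' * ((x == x')%:R * sigma + sigma / 2 ^+ k))).
  do 2![apply: ler_sum => ? _].
  by apply: ler_wpM2l; [apply: mulr_ge0|apply: card_collide_le].
have diag x : \sum_x' t x * t x' * ((x == x')%:R * sigma) = sigma * t x ^+ 2.
  rewrite (bigD1 x) //= eqxx mulr1n mul1r big1 => [|x' x'x]; first by rewrite addr0; ring.
  by rewrite eq_sym (negbTE x'x) mulr0n mul0r mulr0.
rewrite (eq_bigr (fun x => sigma * t x ^+ 2 + sigma / 2 ^+ k * (t x * \sum_x' t x'))).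
  by rewrite big_split /= -!mulr_sumr -mulr_suml -expr2; lra.
move=> x _; rewrite -diag !mulr_sumr -big_split; apply: eq_bigr => x' _ /=; ring.
Qed.

Lemma sum_MS_sq_divE t : sum_MS (fun m s => qcond t m s ^+ 2 / qmarg t s) =
  (sigma * B * \sum_x t x)^-1 *
  \sum_s \sum_(m : k.-tuple bool) (\sum_(x | f s x == m) t x) ^+ 2.
Proof.
rewrite /sum_MS; under eq_bigr do rewrite mulr_sumr.
rewrite exchange_big mulr_sumr; apply: eq_bigr => s _.
rewrite mulr_sumr; apply: eq_bigr => m _.
rewrite qcondE qmargE card_bitsR !invfM invrK.
(* Naming the inverse keeps [field] from requiring [\sum_x t x != 0]. *)
by set w := (\sum_x t x)^-1; field; rewrite !gt_eqF ?sigma_gt0 ?B_gt0 ?exprn_gt0.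
Qed.

Lemma sum_MS_sq_div_le t : (forall x, 0 <= t x) ->
  sum_MS (fun m s => qcond t m s ^+ 2 / qmarg t s) <=
  B^-1 * \big[Num.max/0]_x t x + (2 ^+ k * B)^-1 * \sum_x t x.
Proof.
move=> t0; rewrite sum_MS_sq_divE.
set W := \sum_x t x; set M := \big[Num.max/0]_x t x.
have W0 : 0 <= W by apply: sumr_ge0.
have M0 : 0 <= M by apply: bigmax_ge_id.
have B0 := B_gt0; have S0 := sigma_gt0.
have [->|W_neq0] := eqVneq W 0.
  by rewrite !mulr0 invr0 mul0r addr0 mulr_ge0 // invr_ge0 ltW.
have W_gt0 : 0 < W by rewrite lt_def W_neq0.
have sq_le : \sum_x t x ^+ 2 <= M * W.
  rewrite /W mulr_sumr; apply: ler_sum => x _.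
  by rewrite expr2 [M * _]mulrC ler_wpM2l // le_bigmax.
have c0 : 0 <= (sigma * B * W)^-1 by rewrite invr_ge0 !mulr_ge0 // ltW.
apply: le_trans (ler_wpM2l c0 (collision_sum_le _ t0)) _.
have -> : (sigma * B * W)^-1 * (sigma * (\sum_x t x ^+ 2 + (2 ^+ k)^-1 * W ^+ 2)) =
    B^-1 * (W^-1 * \sum_x t x ^+ 2) + (2 ^+ k * B)^-1 * W.
  by field; rewrite !gt_eqF ?exprn_gt0.
rewrite lerD2r; apply: ler_wpM2l; first by rewrite invr_ge0 ltW.
by rewrite ler_pdivrMl // [W * _]mulrC.
Qed.

Lemma info_density_le t c : (forall x, 0 <= t x) -> (forall x, 0 <= c x) ->
  info_density (fun x => t x + c x) <=
  (ln 2)^-1 / B * \big[Num.max/0]_x t x + k%:R / (2 ^+ k * B) * \sum_x c x.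
Proof.
move=> t0 c0.
have N0 : 0 <= #|{: k.-tuple bool}|%:R^-1 :> R by rewrite invr_ge0 ler0n.
apply: (@le_trans _ _ (sum_MS (fun m s =>
    (ln 2)^-1 * (qcond t m s ^+ 2 / qmarg t s - qcond t m s) + k%:R * qcond c m s))).
  apply: ler_sum => m _; apply: (ler_wpM2l N0); apply: ler_sum => s _.
  rewrite /info_term qcondD qmargD.
  by apply: mul_log2_split_le; rewrite ?qcond_ge0 ?qmarg_ge0 ?qcond_le_qmarg.
rewrite sum_MS_lin !sum_MS_qcond.
have il2 : 0 <= (ln (2 : R))^-1 by rewrite invr_ge0 ltW // ln2_gt0.
by have := ler_wpM2l il2 (sum_MS_sq_div_le _ t0); lra.
Qed.

Section channel.
Context {d : measure_display} {Z : measurableType d}.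
Variables (mu : {measure set Z -> \bar R}) (omega : X -> Z -> R).
Hypothesis omega_ge0 : forall x z, 0 <= omega x z.
Hypothesis omega_meas : forall x, measurable_fun setT (omega x).
Hypothesis omega_prob : forall x, (\int[mu]_z (omega x z)%:E = 1)%E.

Lemma integrable_omega x : mu.-integrable setT (EFin \o omega x).
Proof. by apply: ge0_integrable_EFin => //; rewrite omega_prob ltry. Qed.

Lemma measurable_qcond m s : measurable_fun setT (fun z => qcond (omega^~ z) m s).
Proof.
under eq_fun do rewrite qcondE.
by apply: measurable_funM; [exact: measurable_cst|exact: measurable_sum_cond].
Qed.

Lemma measurable_qmarg s : measurable_fun setT (fun z => qmarg (omega^~ z) s).
Proof.
apply: measurable_sum => m.
by apply: measurable_funM; [exact: measurable_cst|exact: measurable_qcond].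
Qed.

Lemma integrable_qmarg s : mu.-integrable setT (EFin \o (fun z => qmarg (omega^~ z) s)).
Proof.
apply: (eq_integrable measurableT
  (fun z => ((2 ^+ k * B * sigma)^-1)%:E * \sum_x (omega x z)%:E)%E).
  by move=> z _; rewrite /= qmargE sumEFin EFinM.
by apply: integrableZl => //; apply: integrable_sum => // x _; exact: integrable_omega.
Qed.

Lemma measurable_info_term m s :
  measurable_fun setT (fun z => info_term (omega^~ z) m s).
Proof.
(* Avoids measurability of a quotient: [qmarg] is positive wherever [qcond] is. *)
rewrite (_ : (fun z => _) = fun z => (ln 2)^-1 *
    (qcond (omega^~ z) m s * (ln (qcond (omega^~ z) m s) - ln (qmarg (omega^~ z) s)))).
  apply: measurable_funM; first exact: measurable_cst.
  apply: measurable_funM; first exact: measurable_qcond.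
  by apply: measurable_funB; apply: measurableT_comp (@measurable_ln R) _;
    [exact: measurable_qcond|exact: measurable_qmarg].
apply/funext => z; have t0 := omega_ge0^~ z.
apply: mul_log2_divE; first exact: qcond_ge0.
exact: gt0_of_le_mulr (qmarg_ge0 _ _ t0) (qcond_le_qmarg _ _ _ t0).
Qed.

Lemma integrable_info_term m s :
  mu.-integrable setT (EFin \o (fun z => info_term (omega^~ z) m s)).
Proof.
pose C := k%:R * 2 ^+ k + (ln (2 : R))^-1.
have C0 : 0 <= C by rewrite /C addr_ge0 ?mulr_ge0 ?exprn_ge0 // invr_ge0 ltW // ln2_gt0.
apply: (le_integrable measurableT _ _ (integrableZl measurableT C (integrable_qmarg s))).
  exact/measurable_EFinP/measurable_info_term.
move=> z _ /=; have t0 := omega_ge0^~ z.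
rewrite lee_fin [X in _ <= X]ger0_norm ?mulr_ge0 ?qmarg_ge0 //.
apply: le_trans (normr_mul_log2_le (qcond_ge0 _ m s t0) (qmarg_ge0 _ s t0)
  (qcond_le_qmarg _ m s t0)) _.
rewrite /C mulrDl -mulrA lerD2r; apply: ler_wpM2l => //.
exact: qcond_le_qmarg.
Qed.

Lemma integrable_sum_info_term m :
  mu.-integrable setT (fun z => \sum_s (info_term (omega^~ z) m s)%:E)%E.
Proof. by apply: integrable_sum => // s _; exact: integrable_info_term. Qed.

Lemma integrable_info_density :
  mu.-integrable setT (EFin \o (fun z => info_density (omega^~ z))).
Proof.
apply: (eq_integrable measurableT (fun z => \sum_(m : k.-tuple bool)
  (#|{: k.-tuple bool}|%:R^-1)%:E * \sum_s (info_term (omega^~ z) m s)%:E)%E).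
  move=> z _; rewrite /= /info_density /sum_MS -sumEFin; apply: eq_bigr => m _.
  by rewrite EFinM sumEFin.
apply: integrable_sum => // m _; apply: integrableZl => //.
exact: integrable_sum_info_term.
Qed.

Lemma MI_M_ZSE : MI_M_ZS mu f omega = (\int[mu]_z (info_density (omega^~ z))%:E)%E.
Proof.
rewrite /info_density /sum_MS.
under eq_integral do rewrite -sumEFin.
under eq_integral do under eq_bigr do rewrite EFinM -sumEFin.
rewrite integral_sum //; last by move=> m; apply: integrableZl => //; exact: integrable_sum_info_term.
apply: eq_bigr => m _; rewrite integralZl //; last exact: integrable_sum_info_term.
by rewrite integral_sum // => s; exact: integrable_info_term.
Qed.

(* [trunc T] is the density of the subnormalized channel V_T, and
   [Imax_T mu omega T] unfolds to [log2e (max_mass T)]. *)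
Definition trunc (T : set (X * Z)) x z : R := if (x, z) \in T then omega x z else 0.

Definition max_mass (T : set (X * Z)) : \bar R :=
  (\int[mu]_z (\big[Num.max/0]_x trunc T x z)%:E)%E.

Lemma trunc_ge0 T x z : 0 <= trunc T x z.
Proof. by rewrite /trunc; case: ifP. Qed.

Lemma trunc_le T x z : trunc T x z <= omega x z.
Proof. by rewrite /trunc; case: ifP. Qed.

Lemma max_mass_ge0 T : (0 <= max_mass T)%E.
Proof. by apply: integral_ge0 => z _; rewrite lee_fin bigmax_ge_id. Qed.

Section truncation.
Variables (eps : R) (T : set (X * Z)).
Hypothesis T_meas : forall x, measurable [set z | T (x, z)].
Hypothesis T_mass : forall x, ((1 - eps)%:E <= chan mu omega x [set z | T (x, z)])%E.

Lemma mem_section x z : ((x, z) \in T) = (z \in [set z | T (x, z)]).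
Proof. by apply/idP/idP => /set_mem; exact: mem_set. Qed.

Lemma measurable_trunc x : measurable_fun setT (trunc T x).
Proof.
have := measurable_fun_if_mem (T_meas x) (omega_meas x).
by apply: eq_measurable_fun => z _; rewrite /trunc mem_section.
Qed.

Lemma integrable_trunc x : mu.-integrable setT (EFin \o trunc T x).
Proof.
apply: (le_integrable measurableT _ _ (integrable_omega x)).
  exact/measurable_EFinP/measurable_trunc.
by move=> z _ /=; rewrite lee_fin !ger0_norm ?trunc_ge0 ?trunc_le.
Qed.

Lemma chan_truncE x :
  chan mu omega x [set z | T (x, z)] = (\int[mu]_z (trunc T x z)%:E)%E.
Proof.
rewrite /chan integral_mkcond; apply: eq_integral => z _.
by rewrite patchE /trunc mem_section; case: ifP.
Qed.

Lemma integral_sub_trunc_le x : (\int[mu]_z (omega x z - trunc T x z)%:E <= eps%:E)%E.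
Proof.
rewrite integralB_EFin //= ?omega_prob; [|exact: integrable_omega|exact: integrable_trunc].
have := T_mass x; rewrite chan_truncE.
rewrite -(fineK (integrable_fin_num measurableT (integrable_trunc x))).
by rewrite -EFinB !lee_fin; lra.
Qed.

Definition info_bound z : R := (ln 2)^-1 / B * \big[Num.max/0]_x trunc T x z +
  k%:R / (2 ^+ k * B) * \sum_x (omega x z - trunc T x z).

Lemma info_density_le_bound z : info_density (omega^~ z) <= info_bound z.
Proof.
have -> : omega^~ z = fun x => trunc T x z + (omega x z - trunc T x z).
  by apply/funext => x; rewrite addrC subrK.
by apply: info_density_le => x; rewrite ?trunc_ge0 ?subr_ge0 ?trunc_le.
Qed.

Lemma integral_info_bound_le :
  (\int[mu]_z (info_bound z)%:E <= ((ln 2)^-1 / B)%:E * max_mass T + (eps * k%:R)%:E)%E.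
Proof.
rewrite ge0_integral_lin; last 6 first.
- by rewrite divr_ge0 ?invr_ge0 ?ltW ?ln2_gt0 ?B_gt0.
- by rewrite divr_ge0 ?mulr_ge0 ?exprn_ge0 // ltW // B_gt0.
- by apply: measurable_bigmax => x; exact: measurable_trunc.
- by move=> x; apply: measurable_funB => //; exact: measurable_trunc.
- by move=> z; rewrite bigmax_ge_id.
- by move=> x z; rewrite subr_ge0 trunc_le.
apply: leeD2l.
have sum_le : (\sum_x \int[mu]_z (omega x z - trunc T x z)%:E <= (#|X|%:R * eps)%:E)%E.
  apply: (@le_trans _ _ (\sum_(x : X) eps%:E)%E).
    by apply: lee_sum => x _; exact: integral_sub_trunc_le.
  by rewrite sumEFin sumr_const mulr_natl.
have c0 : (0 <= (k%:R / (2 ^+ k * B))%:E)%E.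
  by rewrite lee_fin divr_ge0 ?mulr_ge0 ?exprn_ge0 // ltW // B_gt0.
apply: le_trans (lee_wpmul2l c0 sum_le) _.
have /card_gt0P [s _] := Sd_gt0.
rewrite -EFinM lee_fin (card_balanced s) natrM [(2 ^ k)%:R]natrX.
have -> : k%:R / (2 ^+ k * B) * (2 ^+ k * B * eps) = eps * k%:R.
  by field; rewrite expf_neq0 ?gt_eqF ?B_gt0.
by [].
Qed.

Lemma measurable_info_bound : measurable_fun setT info_bound.
Proof.
apply: measurable_funD; apply: measurable_funM; try exact: measurable_cst.
  by apply: measurable_bigmax => x; exact: measurable_trunc.
by apply: measurable_sum => x; apply: measurable_funB => //; exact: measurable_trunc.
Qed.

Lemma info_bound_ge0 z : 0 <= info_bound z.
Proof.
apply: addr_ge0; apply: mulr_ge0.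
- by rewrite divr_ge0 ?invr_ge0 ?ltW ?ln2_gt0 ?B_gt0.
- exact: bigmax_ge_id.
- by rewrite divr_ge0 ?mulr_ge0 ?exprn_ge0 // ltW // B_gt0.
- by apply: sumr_ge0 => x _; rewrite subr_ge0 trunc_le.
Qed.

Lemma MI_M_ZS_le_max_mass :
  (MI_M_ZS mu f omega <= ((ln 2)^-1 / B)%:E * max_mass T + (eps * k%:R)%:E)%E.
Proof.
have a_gt0 : 0 < (ln 2)^-1 / B by rewrite divr_gt0 ?invr_gt0 ?ln2_gt0 ?B_gt0.
have [->|mass_neq] := eqVneq (max_mass T) +oo%E.
  by rewrite mulry gtr0_sg // mul1e addye // leey.
have mass_fin : max_mass T \is a fin_num by rewrite ge0_fin_numE ?max_mass_ge0 ?ltey.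
have bound_int : mu.-integrable setT (EFin \o info_bound).
  apply: ge0_integrable_EFin; [exact: measurable_info_bound|exact: info_bound_ge0|].
  apply: le_lt_trans integral_info_bound_le _.
  by rewrite -(fineK mass_fin) -EFinM -EFinD ltry.
rewrite MI_M_ZSE; apply: le_trans integral_info_bound_le.
apply: le_integral => //; first exact: integrable_info_density.
by move=> z _; rewrite lee_fin info_density_le_bound.
Qed.

End truncation.

Lemma MI_M_ZS_le_smooth_Imax (eps : R) :
  (MI_M_ZS mu f omega <=
     (ln 2)^-1%:E * exp2e (smooth_Imax mu omega eps - (b%:R)%:E) + (eps * k%:R)%:E)%E.
Proof.
apply: le_exp2e_inf => [|r]; first by rewrite invr_gt0 ln2_gt0.
rewrite lteBlDr // -EFinD => /ereal_inf_lt[_ [T [T_meas T_mass] <-]].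
move=> /(le_powR2_of_log2e_lt (max_mass_ge0 T)) mass_le.
apply: le_trans (MI_M_ZS_le_max_mass _ _ T_meas T_mass) _; rewrite EFinD; apply: leeD2r.
have a0 : (0 <= ((ln 2)^-1 / B)%:E)%E.
  by rewrite lee_fin divr_ge0 ?invr_ge0 ?ltW ?ln2_gt0 ?B_gt0.
apply: le_trans (lee_wpmul2l a0 mass_le) _.
rewrite -EFinM lee_fin powRD ?pnatr_eq0 ?implybT // powR_mulrn // -natrX.
by rewrite [_ * (2 ^ b)%:R]mulrC mulrA divfK // gt_eqF ?B_gt0.
Qed.

End channel.

End balanced.
End hashing.

Lemma MI_M_ZS_seedless {R : realType} {d : measure_display} {Z : measurableType d}
    (mu : {measure set Z -> \bar R}) (X Sd : finType) (k : nat)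
    (f : Sd -> X -> k.-tuple bool) (omega : X -> Z -> R) :
  #|Sd| = 0%N -> MI_M_ZS mu f omega = 0%E.
Proof.
move=> Sd0; rewrite /MI_M_ZS /mutinfo_dc big1 // => m _.
by rewrite big1 ?mule0 // => s _; move: Sd0; rewrite (cardD1 s) inE.
Qed.

Theorem lemma4 (R : realType) (d : measure_display) (Z : measurableType d)
  (mu : {measure set Z -> \bar R}) (X : finType) (omega : X -> Z -> R)
  (omega_ge0 : forall x z, 0 <= omega x z)
  (omega_meas : forall x, measurable_fun setT (omega x))
  (omega_prob : forall x, (\int[mu]_z (omega x z)%:E = 1)%E)
  (k b : nat) (Sd : finType) (f : Sd -> X -> k.-tuple bool)
  (f_uhf : is_UHF (R := R) f) (f_bal : is_balanced b f)
  (eps : R) (eps_ge0 : 0 <= eps) (eps_lt1 : eps < 1) :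
  (MI_M_ZS mu f omega <=
     (ln 2)^-1%:E * exp2e (smooth_Imax mu omega eps - (b%:R)%:E) + (eps * k%:R)%:E)%E.
Proof.
(* The bound holds for every [eps]. *)
have [Sd0|Sd_gt0] := posnP #|Sd|; last exact: MI_M_ZS_le_smooth_Imax.
rewrite MI_M_ZS_seedless // adde_ge0 ?mule_ge0 ?exp2e_ge0 //.
  by rewrite lee_fin invr_ge0 ltW // ln2_gt0.
by rewrite lee_fin mulr_ge0.
Qed.
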